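(* Let $0<q_1<q_2<1$, $a,b,c\in\mathbb{R}$, and consider the complex-valued function $$\Delta(s)=s^{q_1+q_2}+as^{q_2}+bs^{q_1}+c,$$ where $s^{q_1},s^{q_2},s^{q_1+q_2}$ are principal values of the complex power functions. 1. If $c<0$, then $\Delta(s)$ has at least one positive real root. 2. $\Delta(0)=0$ if and only if $c=0$. 3. Assume $c>0$, and let $a^\star_{c,q_1,q_2}:\mathbb{R}\to\mathbb{R}$ be the function whose graph (in the $(b,a)$-plane) is the curve $b=\rho_1\omega^{q_2}-c\rho_2\omega^{-q_1}$, $a=c\rho_1\omega^{-q_2}-\rho_2\omega^{q_1}$, $\omega>0$, where $\rho_1=\sin\frac{q_1\pi}{2}/\sin\frac{(q_2-q_1)\pi}{2}$ and $\rho_2=\sin\frac{q_2\pi}{2}/\sin\frac{(q_2-q_1)\pi}{2}$; write $a^\star(b,c,q_1,q_2)=a^\star_{c,q_1,q_2}(b)$. Then: (a) if $a\ge 0$ and $b\ge 0$, all roots of $\Delta(s)$ satisfy $\Re(s)<0$; (b) $\Delta(s)$ has a pair of pure imaginary roots if and only if $a=a^\star(b,c,q_1,q_2)$; (c) if $s=s(a,b,c,q_1,q_2)$ is a root of $\Delta(s)$, depending differentiably on $a$, such that $\Re(s(a^\star,b,c,q_1,q_2))=0$ where $a^\star=a^\star(b,c,q_1,q_2)$, then the transversality condition $\frac{\partial \Re(s)}{\partial a}\big|_{a=a^\star}<0$ holds; (d) all roots of $\Delta(s)$ are in the open left half-plane if and only if $a>a^\star(b,c,q_1,q_2)$; (e)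 $\Delta(s)$ has a pair of roots in the open right half-plane if and only if $a<a^\star(b,c,q_1,q_2)$.
   Context: Principal value: $s^{q}=|s|^q e^{iq\arg(s)}$ with $\arg(s)\in(-\pi,\pi]$ (and $0^q=0$). The curve described in part 3 is the graph of a bijective decreasing function $\mathbb{R}\to\mathbb{R}$, so $a^\star_{c,q_1,q_2}$ is well defined. *)

From Stdlib Require Import Reals Lra ClassicalEpsilon.
From Coquelicot Require Import Coquelicot.
Open Scope R_scope.

(* Principal argument, with values in (-PI, PI] (atan2 convention); Carg 0 = 0. *)
Definition Carg (z : C) : R :=
  let x := fst z in let y := snd z in
  if Rlt_dec 0 x then atan (y / x)
  else if Rlt_dec x 0 then
    (if Rle_dec 0 y then atan (y / x) + PI else atan (y / x) - PI)
  else if Rlt_dec 0 y then PI / 2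
  else if Rlt_dec y 0 then - (PI / 2)
  else 0.

(* Principal power s^q = |s|^q e^{i q arg s}, and 0^q = 0. *)
Definition cpow (s : C) (q : R) : C :=
  if Req_EM_T (Cmod s) 0 then RtoC 0
  else (Rpower (Cmod s) q * cos (q * Carg s), Rpower (Cmod s) q * sin (q * Carg s)).

Definition DeltaQ (q1 q2 a b c : R) (s : C) : C :=
  (cpow s (q1 + q2) + RtoC a * cpow s q2 + RtoC b * cpow s q1 + RtoC c)%C.

Definition rho1 (q1 q2 : R) : R := sin (q1 * PI / 2) / sin ((q2 - q1) * PI / 2).
Definition rho2 (q1 q2 : R) : R := sin (q2 * PI / 2) / sin ((q2 - q1) * PI / 2).

Definition curve_b (c q1 q2 w : R) : R :=
  rho1 q1 q2 * Rpower w q2 - c * rho2 q1 q2 * Rpower w (- q1).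
Definition curve_a (c q1 q2 w : R) : R :=
  c * rho1 q1 q2 * Rpower w (- q2) - rho2 q1 q2 * Rpower w q1.

(* a*_{c,q1,q2}(b): the value curve_a at the (unique) omega > 0 with curve_b omega = b. *)
Definition a_star (b c q1 q2 : R) : R :=
  curve_a c q1 q2
    (epsilon (inhabits 1) (fun w => 0 < w /\ curve_b c q1 q2 w = b)).

From Stdlib Require Import Reals Lra ClassicalEpsilon.
From Coquelicot Require Import Coquelicot.
Open Scope R_scope.

(* Write a root as [s = r e^(i t)] with [0 < t < PI].  The real and imaginary parts of
   [Delta s = 0] are linear in [a] and [b]; solving them gives [b = root_b r t] and
   [a = root_a r t].  As [root_b] is increasing in [r], each argument [t] carries exactly one
   modulus [root_mod t], hence exactly one value [a_of_arg t] of [a] for which [Delta] has a root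
   of argument [t], and [a_star = a_of_arg (PI / 2)].  A trigonometric computation shows that
   [a_of_arg] is increasing on [[0, PI / 2]], and a weighted AM-GM inequality shows that
   [a_of_arg 0] is the largest [a] for which [Delta] has a positive real root.  So [Delta] has a
   root in the closed right half-plane iff [a <= a_star], on the imaginary axis iff [a = a_star];
   transversality comes from differentiating [a_of_arg (arg s(a)) = a] at [a_star]. *)

Lemma locally_lt_of_continuity (f : R -> R) (x v : R) :
  continuity_pt f x -> f x < v -> locally x (fun y => f y < v).
Proof. intros Hc Hv. exact (locally_pt_comp _ f x (open_lt v (f x) Hv) Hc). Qed.

Lemma locally_gt_of_continuity (f : R -> R) (x v : R) :
  continuity_pt f x -> v < f x -> locally x (fun y => v < f y).
Proof. intros Hc Hv. exact (locally_pt_comp _ f x (open_gt v (f x) Hv) Hc). Qed.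

Lemma locally_open_interval (a b x : R) : a < x < b -> locally x (fun y => a < y < b).
Proof. intros Hx. exact (open_and _ _ (open_gt a) (open_lt b) x Hx). Qed.

Lemma locally_neq (x y : R) : x <> y -> locally x (fun z => z <> y).
Proof.
  intros Hxy. destruct (Rlt_or_le y x).
  - eapply filter_imp; [|now apply (open_gt y)]. simpl. intros; lra.
  - eapply filter_imp; [|apply (open_lt y); lra]. simpl. intros; lra.
Qed.

Lemma continuity_pt_of_ex_derive (f : R -> R) (x : R) : ex_derive f x -> continuity_pt f x.
Proof. intros H. apply continuity_pt_filterlim. now apply ex_derive_continuous in H. Qed.

Lemma IVT_le (f : R -> R) (x y v : R) : x <= y ->
  (forall z, x <= z <= y -> continuity_pt f z) -> f x <= v <= f y ->
  exists z, x <= z <= y /\ f z = v.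
Proof.
  intros Hxy Hc [Hv1 Hv2].
  destruct (Req_dec (f x) v) as [Ex|Nx]; [exists x; split; [lra|exact Ex]|].
  destruct (Req_dec (f y) v) as [Ey|Ny]; [exists y; split; [lra|exact Ey]|].
  destruct (Ranalysis5.IVT_interv (fun z => f z - v) x y) as [z [Hz Hfz]].
  - intros z Hz. apply (continuity_pt_minus f (fun _ => v)); [now apply Hc|].
    now apply continuity_pt_const.
  - destruct (Req_dec x y) as [<-|]; lra.
  - lra.
  - lra.
  - exists z. split; [exact Hz|lra].
Qed.

Lemma Rpower_pos (x y : R) : 0 < Rpower x y.
Proof. apply exp_pos. Qed.

Lemma Rpower_1_l (y : R) : Rpower 1 y = 1.
Proof. unfold Rpower. rewrite ln_1, Rmult_0_r. apply exp_0. Qed.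

Lemma Rpower_Rinv_exp (x q : R) : 0 < x -> q <> 0 -> Rpower (Rpower x (/ q)) q = x.
Proof.
  intros Hx Hq. rewrite Rpower_mult, Rinv_l by exact Hq. now apply Rpower_1.
Qed.

Lemma Rpower_ge_1 (x y : R) : 1 <= x -> 0 <= y -> 1 <= Rpower x y.
Proof. intros Hx Hy. rewrite <- (Rpower_O x) by lra. now apply Rle_Rpower. Qed.

Lemma Rpower_le_1 (x y : R) : 0 < x <= 1 -> 0 <= y -> Rpower x y <= 1.
Proof. intros Hx Hy. rewrite <- (Rpower_1_l y). now apply Rle_Rpower_l. Qed.

Lemma Rle_Rpower_le_1 (x n m : R) : 0 < x <= 1 -> n <= m -> Rpower x m <= Rpower x n.
Proof.
  intros Hx Hnm. assert (ln x <= 0) by (rewrite <- ln_1; apply ln_le; lra).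
  unfold Rpower. destruct (Req_dec (m * ln x) (n * ln x)) as [E|N].
  - rewrite E. lra.
  - left. apply exp_increasing. nra.
Qed.

Lemma Rpower_opp_lt (y a b : R) : 0 < y -> 0 < a < b -> Rpower b (- y) < Rpower a (- y).
Proof.
  intros Hy Hab. rewrite !Rpower_Ropp. apply Rinv_lt_contravar.
  - apply Rmult_lt_0_compat; apply Rpower_pos.
  - now apply Rlt_Rpower_l.
Qed.

Lemma Rpower_unbounded (q M : R) : 0 < q -> exists r, 1 <= r /\ M <= Rpower r q.
Proof.
  intros Hq. exists (Rpower (Rmax 1 M) (/ q)). split.
  - apply Rpower_ge_1; [apply Rmax_l|left; now apply Rinv_0_lt_compat].
  - rewrite Rpower_Rinv_exp; [apply Rmax_r| |lra]. pose proof (Rmax_l 1 M). lra.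
Qed.

Lemma Rpower_opp_unbounded (q M : R) : 0 < q -> exists r, 0 < r <= 1 /\ M <= Rpower r (- q).
Proof.
  intros Hq. destruct (Rpower_unbounded q M Hq) as [r [Hr HM]]. exists (/ r). split.
  - split; [apply Rinv_0_lt_compat; lra|rewrite <- Rinv_1; apply Rinv_le_contravar; lra].
  - unfold Rpower in *. rewrite ln_Rinv by lra. now replace (- q * - ln r) with (q * ln r) by ring.
Qed.

Lemma is_derive_Rpower (y x : R) : 0 < x ->
  is_derive (fun r => Rpower r y) x (y * (Rpower x y / x)).
Proof. intros Hx. unfold Rpower. auto_derive; [exact Hx|field; lra]. Qed.

Lemma continuity_pt_Rpower (y x : R) : 0 < x -> continuity_pt (fun r => Rpower r y) x.
Proof. intros Hx. apply continuity_pt_of_ex_derive. eexists. now apply is_derive_Rpower. Qed.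

(* Tangent lines of [exp] at [l ln z], evaluated at [ln z] and at [0]. *)
Lemma Rpower_le_convex (z l : R) : 0 < z -> 0 < l < 1 -> Rpower z l <= l * z + (1 - l).
Proof.
  intros Hz Hl. unfold Rpower. set (X := ln z). set (E := exp (l * X)).
  assert (Tangent : forall Y, E * (1 + (Y - l * X)) <= exp Y).
  { intros Y. replace (exp Y) with (E * exp (Y - l * X))
      by (unfold E; rewrite <- exp_plus; f_equal; ring).
    apply Rmult_le_compat_l; [left; apply exp_pos|apply exp_ineq1_le]. }
  pose proof (Tangent X) as TX. pose proof (Tangent 0) as T0.
  assert (EX : exp X = z) by (apply exp_ln, Hz).
  rewrite exp_0 in T0. rewrite EX in TX.
  assert (l * (E * (1 + (X - l * X))) <= l * z) by (apply Rmult_le_compat_l; lra).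
  assert ((1 - l) * (E * (1 + (0 - l * X))) <= (1 - l) * 1) by (apply Rmult_le_compat_l; lra).
  lra.
Qed.

Lemma Rpower_young (y p q : R) : 0 < y -> 0 < p < q -> q * Rpower y p <= p * Rpower y q + (q - p).
Proof.
  intros Hy Hpq. replace (Rpower y p) with (Rpower (Rpower y q) (p / q))
    by (rewrite Rpower_mult; f_equal; field; lra).
  pose proof (Rpower_le_convex (Rpower y q) (p / q) (Rpower_pos y q)
    ltac:(split; [apply Rdiv_lt_0_compat|apply Rmult_lt_reg_r with q; unfold Rdiv;
      rewrite ?Rmult_assoc, ?Rinv_l, ?Rmult_1_r]; lra)) as Hc.
  apply Rmult_le_compat_l with (r := q) in Hc; [|lra].
  replace (q * (p / q * Rpower y q + (1 - p / q))) with (p * Rpower y q + (q - p)) in Hc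
    by (field; lra).
  exact Hc.
Qed.

Definition sinc (x : R) : R := if Req_EM_T x 0 then 1 else sin x / x.

Lemma sinc_nz (x : R) : x <> 0 -> sinc x = sin x / x.
Proof. intros H. unfold sinc. now destruct (Req_EM_T x 0). Qed.

Lemma sinc_pos (x : R) : - PI < x < PI -> 0 < sinc x.
Proof.
  intros Hx. unfold sinc. destruct (Req_EM_T x 0) as [_|Hnz]; [lra|].
  destruct (Rlt_or_le 0 x).
  - apply Rdiv_lt_0_compat; [apply sin_gt_0|]; lra.
  - pose proof (sin_lt_0_var x ltac:(lra) ltac:(lra)).
    replace (sin x / x) with (- sin x / - x) by (field; exact Hnz).
    apply Rdiv_lt_0_compat; lra.
Qed.

Lemma continuity_pt_sinc (x : R) : continuity_pt sinc x.
Proof.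
  destruct (Req_dec x 0) as [->|Hx].
  - apply continuity_pt_locally. intros eps.
    pose proof (derivable_pt_lim_sin 0) as Hd. rewrite cos_0 in Hd.
    destruct (Hd eps (cond_pos eps)) as [del Hdel].
    exists del. intros y Hy. change (Rabs (y - 0) < del) in Hy.
    unfold sinc. destruct (Req_EM_T 0 0) as [_|]; [|lra].
    destruct (Req_EM_T y 0) as [->|Hy0].
    + rewrite Rminus_diag, Rabs_R0. apply cond_pos.
    + specialize (Hdel y Hy0 ltac:(now rewrite Rminus_0_r in Hy)).
      now rewrite Rplus_0_l, sin_0, Rminus_0_r in Hdel.
  - apply continuity_pt_ext_loc with (f := fun y => sin y / y).
    + eapply filter_imp; [|exact (locally_neq x 0 Hx)]. intros y Hy. now rewrite sinc_nz.
    + apply (continuity_pt_div sin (fun y => y));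
        [apply continuity_sin|apply continuity_pt_id|exact Hx].
Qed.

Lemma continuity_pt_sinc_scal (k x : R) : continuity_pt (fun t => sinc (k * t)) x.
Proof.
  apply (continuity_pt_comp (fun t => k * t) sinc); [|apply continuity_pt_sinc].
  apply derivable_continuous_pt, derivable_pt_scal, derivable_pt_id.
Qed.

Lemma sinc_scal_pos (k t : R) : 0 < k < 1 -> - PI < t < PI -> 0 < sinc (k * t).
Proof.
  intros Hk Ht. apply sinc_pos. split.
  - destruct (Rle_or_lt 0 t); nra.
  - destruct (Rle_or_lt 0 t); nra.
Qed.

Lemma sin_scal_neq_0 (k t : R) : 0 < k < 1 -> - PI < t < PI -> t <> 0 -> sin (k * t) <> 0.
Proof.
  intros Hk Ht Hnz E. pose proof (sinc_scal_pos k t Hk Ht) as Hs.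
  rewrite sinc_nz, E in Hs by (apply Rmult_integral_contrapositive; split; lra).
  unfold Rdiv in Hs. lra.
Qed.

(* Caratheodory's characterisation of the derivative. *)
Definition slope (f : R -> R) (x l y : R) : R :=
  if Req_EM_T y x then l else (f y - f x) / (y - x).

Lemma slope_spec (f : R -> R) (x l y : R) : f y - f x = slope f x l y * (y - x).
Proof. unfold slope. destruct (Req_EM_T y x) as [->|]; [ring|field; lra]. Qed.

Lemma continuity_pt_slope (f : R -> R) (x l : R) :
  derivable_pt_lim f x l -> continuity_pt (slope f x l) x.
Proof.
  intros Hd. apply continuity_pt_locally. intros eps.
  destruct (Hd eps (cond_pos eps)) as [del Hdel].
  exists del. intros y Hy. change (Rabs (y - x) < del) in Hy.
  unfold slope. destruct (Req_EM_T x x) as [_|]; [|lra].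
  destruct (Req_EM_T y x) as [->|Hyx].
  - rewrite Rminus_diag, Rabs_R0. apply cond_pos.
  - specialize (Hdel (y - x) ltac:(lra) Hy). now rewrite Rplus_minus in Hdel.
Qed.

Lemma slope_pos (f : R -> R) (x l y : R) : 0 < l ->
  (y < x -> f y < f x) -> (x < y -> f x < f y) -> 0 < slope f x l y.
Proof.
  intros Hl H1 H2. unfold slope. destruct (Req_EM_T y x) as [_|Hyx]; [exact Hl|].
  destruct (Rlt_or_le y x) as [Hy|Hy].
  - replace ((f y - f x) / (y - x)) with ((f x - f y) / (x - y)) by (field; lra).
    apply Rdiv_lt_0_compat; [specialize (H1 Hy)|]; lra.
  - apply Rdiv_lt_0_compat; [specialize (H2 ltac:(lra))|]; lra.
Qed.

Lemma slope_neg (f : R -> R) (x l y : R) : l < 0 ->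
  (y < x -> f x < f y) -> (x < y -> f y < f x) -> slope f x l y < 0.
Proof.
  intros Hl H1 H2. unfold slope. destruct (Req_EM_T y x) as [_|Hyx]; [exact Hl|].
  destruct (Rlt_or_le y x) as [Hy|Hy].
  - apply Rdiv_pos_neg; [specialize (H1 Hy)|]; lra.
  - apply Rdiv_neg_pos; [specialize (H2 ltac:(lra))|]; lra.
Qed.

Lemma is_derive_of_factorization (f Q : R -> R) (x : R) :
  locally x (fun y => f y - f x = (y - x) * Q y) -> continuity_pt Q x ->
  is_derive f x (Q x).
Proof.
  intros Hfac HQ. apply is_derive_Reals. intros eps Heps.
  destruct (filter_and _ _ Hfac (proj1 (continuity_pt_locally Q x) HQ (mkposreal eps Heps)))
    as [del Hdel].
  exists del. intros h Hh Hhd.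
  destruct (Hdel (x + h)) as [Hf HQh].
  { change (Rabs (x + h - x) < del). now replace (x + h - x) with h by ring. }
  rewrite Hf. replace ((x + h - x) * Q (x + h) / h) with (Q (x + h)) by (field; exact Hh).
  exact HQh.
Qed.

Lemma x_cot_decreasing (x y : R) : 0 < x -> x < y -> y < PI / 2 ->
  y * cos y / sin y < x * cos x / sin x.
Proof.
  intros Hx Hxy Hy.
  assert (Hs : forall z, 0 < z -> z < PI / 2 -> 0 < sin z) by (intros; apply sin_gt_0; lra).
  destruct (MVT_gen (fun z => z * cos z / sin z) x y (fun z => (sin z * cos z - z) / (sin z)^2))
    as [z [Hz E]].
  - intros z Hz. rewrite Rmin_left, Rmax_right in Hz by lra.
    assert (sin z <> 0) by (apply Rgt_not_eq, Hs; lra).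
    auto_derive; [exact H|].
    pose proof (sin2_cos2 z) as P. unfold Rsqr in P.
    field_simplify_eq; [|exact H]. nra.
  - intros z Hz. rewrite Rmin_left, Rmax_right in Hz by lra.
    apply (continuity_pt_div (fun z => z * cos z) sin).
    + apply (continuity_pt_mult (fun z => z) cos); [apply continuity_pt_id|apply continuity_cos].
    + apply continuity_sin.
    + apply Rgt_not_eq, Hs; lra.
  - rewrite Rmin_left, Rmax_right in Hz by lra.
    assert (0 < sin z) by (apply Hs; lra).
    assert (sin z * cos z < z)
      by (pose proof (sin_lt_x (2 * z) ltac:(lra)); rewrite sin_2a in *; lra).
    assert ((sin z * cos z - z) / sin z ^ 2 < 0) by (apply Rdiv_neg_pos; [lra|apply pow_lt; lra]).
    nra.
Qed.

Lemma rotation_eq_0 (u v α β : R) : sin (β - α) <> 0 ->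
  u * cos α - v * sin α = 0 -> u * cos β - v * sin β = 0 -> u = 0 /\ v = 0.
Proof.
  intros Hs Eα Eβ. rewrite sin_minus in Hs. split.
  - apply (Rmult_eq_reg_r (sin β * cos α - cos β * sin α)); [|exact Hs].
    transitivity (sin β * (u * cos α - v * sin α) - sin α * (u * cos β - v * sin β)); [ring|].
    rewrite Eα, Eβ. ring.
  - apply (Rmult_eq_reg_r (sin β * cos α - cos β * sin α)); [|exact Hs].
    transitivity (cos β * (u * cos α - v * sin α) - cos α * (u * cos β - v * sin β)); [ring|].
    rewrite Eα, Eβ. ring.
Qed.

Lemma Carg_upper (x y : R) : 0 < y -> Carg (x, y) = PI / 2 - atan (x / y).
Proof.
  intros Hy. unfold Carg. simpl.
  destruct (Rlt_dec 0 x) as [Hx|Hx]; [|destruct (Rlt_dec x 0) as [Hx'|Hx']].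
  - replace (y / x) with (/ (x / y)) by (field; lra).
    apply atan_inv, Rdiv_lt_0_compat; lra.
  - destruct (Rle_dec 0 y) as [_|]; [|lra].
    replace (y / x) with (- / (- x / y)) by (field; lra).
    rewrite atan_opp, atan_inv by (apply Rdiv_lt_0_compat; lra).
    replace (- x / y) with (- (x / y)) by (field; lra). rewrite atan_opp. lra.
  - replace x with 0 by lra. destruct (Rlt_dec 0 y) as [_|]; [|lra].
    rewrite Rdiv_0_l, atan_0. lra.
Qed.

Lemma Carg_lower (x y : R) : y < 0 -> Carg (x, y) = - (PI / 2) - atan (x / y).
Proof.
  intros Hy. unfold Carg. simpl.
  destruct (Rlt_dec 0 x) as [Hx|Hx]; [|destruct (Rlt_dec x 0) as [Hx'|Hx']].
  - replace (y / x) with (- / (x / - y)) by (field; lra).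
    rewrite atan_opp, atan_inv by (apply Rdiv_lt_0_compat; lra).
    replace (x / - y) with (- (x / y)) by (field; lra). rewrite atan_opp. lra.
  - destruct (Rle_dec 0 y) as [|_]; [lra|].
    replace (y / x) with (/ (x / y)) by (field; lra).
    rewrite atan_inv by (replace (x / y) with (- x / - y) by (field; lra);
                         apply Rdiv_lt_0_compat; lra).
    lra.
  - replace x with 0 by lra.
    destruct (Rlt_dec 0 y) as [|_]; [lra|]. destruct (Rlt_dec y 0) as [_|]; [|lra].
    rewrite Rdiv_0_l, atan_0. lra.
Qed.

Lemma Carg_conj (x y : R) : y <> 0 -> Carg (x, - y) = - Carg (x, y).
Proof.
  intros Hy. destruct (Rlt_or_le 0 y).
  - rewrite Carg_lower, Carg_upper by lra.
    replace (x / - y) with (- (x / y)) by (field; lra). rewrite atan_opp. lra.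
  - rewrite Carg_upper, Carg_lower by lra.
    replace (x / - y) with (- (x / y)) by (field; lra). rewrite atan_opp. lra.
Qed.

Lemma Carg_upper_bound (x y : R) : 0 < y -> 0 < Carg (x, y) < PI.
Proof. intros Hy. rewrite Carg_upper by exact Hy. pose proof (atan_bound (x / y)). lra. Qed.

Lemma Carg_upper_right_le (x y : R) : 0 < y -> 0 <= x -> Carg (x, y) <= PI / 2.
Proof.
  intros Hy Hx. rewrite Carg_upper by exact Hy.
  destruct (Rle_lt_or_eq_dec 0 x Hx) as [Hx'|<-].
  - pose proof (atan_increasing 0 (x / y) ltac:(apply Rdiv_lt_0_compat; lra)).
    rewrite atan_0 in *. lra.
  - rewrite Rdiv_0_l, atan_0. lra.
Qed.

Lemma Carg_upper_right_lt (x y : R) : 0 < y -> 0 < x -> Carg (x, y) < PI / 2.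
Proof.
  intros Hy Hx. rewrite Carg_upper by exact Hy.
  pose proof (atan_increasing 0 (x / y) ltac:(apply Rdiv_lt_0_compat; lra)).
  rewrite atan_0 in *. lra.
Qed.

Lemma Carg_pos_real (x : R) : 0 < x -> Carg (x, 0) = 0.
Proof.
  intros Hx. unfold Carg. simpl. destruct (Rlt_dec 0 x) as [_|]; [|lra].
  rewrite Rdiv_0_l. apply atan_0.
Qed.

Lemma Carg_polar (r t : R) : 0 < r -> 0 < t < PI -> Carg (r * cos t, r * sin t) = t.
Proof.
  intros Hr Ht. assert (Hs : 0 < sin t) by (apply sin_gt_0; lra).
  rewrite Carg_upper by (apply Rmult_lt_0_compat; lra).
  replace (r * cos t / (r * sin t)) with (tan (PI / 2 - t)).
  - rewrite atan_tan by lra. lra.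
  - unfold tan. rewrite sin_shift, cos_shift. field. lra.
Qed.

Lemma Cmod_polar (r t : R) : 0 < r -> Cmod (r * cos t, r * sin t) = r.
Proof.
  intros Hr. unfold Cmod. simpl. pose proof (sin2_cos2 t) as P. unfold Rsqr in P.
  replace (r * cos t * (r * cos t * 1) + r * sin t * (r * sin t * 1)) with (r * r) by nra.
  apply sqrt_square. lra.
Qed.

Lemma Cmod_pos_real (x : R) : 0 < x -> Cmod (x, 0) = x.
Proof. intros Hx. change (x, 0) with (RtoC x). rewrite Cmod_R. now apply Rabs_pos_eq, Rlt_le. Qed.

Lemma Cmod_pos_of_im (x y : R) : y <> 0 -> 0 < Cmod (x, y).
Proof. intros Hy. apply Cmod_gt_0. intros E. injection E. lra. Qed.

Section Exponents.

Variables q1 q2 : R.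
Hypothesis Hq1 : 0 < q1.
Hypothesis Hq12 : q1 < q2.
Hypothesis Hq2 : q2 < 1.

Definition DeltaR (a b c x : R) : R :=
  Rpower x (q1 + q2) + a * Rpower x q2 + b * Rpower x q1 + c.

Definition Delta_re (a b c r t : R) : R :=
  Rpower r (q1 + q2) * cos ((q1 + q2) * t) + a * (Rpower r q2 * cos (q2 * t))
  + b * (Rpower r q1 * cos (q1 * t)) + c.

Definition Delta_im (a b r t : R) : R :=
  Rpower r (q1 + q2) * sin ((q1 + q2) * t) + a * (Rpower r q2 * sin (q2 * t))
  + b * (Rpower r q1 * sin (q1 * t)).

Lemma DeltaQ_polar (a b c : R) (s : C) : 0 < Cmod s ->
  DeltaQ q1 q2 a b c s = (Delta_re a b c (Cmod s) (Carg s), Delta_im a b (Cmod s) (Carg s)).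
Proof.
  intros Hs. unfold DeltaQ, cpow, Delta_re, Delta_im.
  destruct (Req_EM_T (Cmod s) 0) as [|_]; [lra|].
  unfold Cplus, Cmult, RtoC. simpl. f_equal; ring.
Qed.

Lemma DeltaQ_eq_0_polar (a b c : R) (s : C) : 0 < Cmod s ->
  DeltaQ q1 q2 a b c s = 0 <->
  Delta_re a b c (Cmod s) (Carg s) = 0 /\ Delta_im a b (Cmod s) (Carg s) = 0.
Proof.
  intros Hs. rewrite DeltaQ_polar by exact Hs. split.
  - intros E. now injection E.
  - intros [-> ->]. reflexivity.
Qed.

Lemma DeltaQ_pos_real (a b c x : R) : 0 < x -> DeltaQ q1 q2 a b c (x, 0) = (DeltaR a b c x, 0).
Proof.
  intros Hx. rewrite DeltaQ_polar by (rewrite Cmod_pos_real; lra).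
  rewrite Cmod_pos_real, Carg_pos_real by exact Hx.
  unfold Delta_re, Delta_im, DeltaR. rewrite !Rmult_0_r, cos_0, sin_0. f_equal; ring.
Qed.

Lemma DeltaQ_0 (a b c : R) : DeltaQ q1 q2 a b c 0 = c.
Proof.
  unfold DeltaQ, cpow. rewrite Cmod_0. destruct (Req_EM_T 0 0) as [_|]; [|lra].
  unfold Cplus, Cmult, RtoC. simpl. f_equal; ring.
Qed.

Lemma DeltaQ_conj_eq_0 (a b c x y : R) : y <> 0 ->
  DeltaQ q1 q2 a b c (x, - y) = 0 <-> DeltaQ q1 q2 a b c (x, y) = 0.
Proof.
  intros Hy. change (x, - y) with (Cconj (x, y)).
  rewrite !DeltaQ_eq_0_polar by (rewrite ?Cmod_conj; now apply Cmod_pos_of_im).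
  rewrite Cmod_conj. change (Cconj (x, y)) with (x, - y). rewrite Carg_conj by exact Hy.
  unfold Delta_re, Delta_im. rewrite !Ropp_mult_distr_r_reverse, !cos_neg, !sin_neg.
  split; intros [E1 E2]; split; lra.
Qed.

Lemma Delta_rotate (a b c r t α : R) :
  Delta_im a b r t * cos α - Delta_re a b c r t * sin α =
  Rpower r (q1 + q2) * sin ((q1 + q2) * t - α) + a * (Rpower r q2 * sin (q2 * t - α))
  + b * (Rpower r q1 * sin (q1 * t - α)) - c * sin α.
Proof. unfold Delta_im, Delta_re. rewrite !sin_minus. ring. Qed.

Lemma continuity_pt_DeltaR (a b c x : R) : 0 < x -> continuity_pt (DeltaR a b c) x.
Proof.
  intros Hx. apply continuity_pt_of_ex_derive. unfold DeltaR, Rpower.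
  auto_derive. repeat split; lra.
Qed.

Lemma DeltaR_near_0 (a b c eps : R) : 0 < eps ->
  exists del, 0 < del <= 1 /\ forall x, 0 < x <= del -> Rabs (DeltaR a b c x - c) < eps.
Proof.
  intros Heps. set (K := 1 + Rabs a + Rabs b).
  assert (HK : 0 < K) by (unfold K; pose proof (Rabs_pos a); pose proof (Rabs_pos b); lra).
  destruct (Rpower_opp_unbounded q1 (2 * K / eps) Hq1) as [del [Hdel Hbig]].
  exists del. split; [exact Hdel|]. intros x Hx.
  assert (Hx1 : Rpower x q1 <= eps / (2 * K)).
  { apply Rle_trans with (Rpower del q1); [apply Rle_Rpower_l; lra|].
    rewrite Rpower_Ropp in Hbig.
    replace (Rpower del q1) with (/ / Rpower del q1) by (field; apply Rgt_not_eq, Rpower_pos).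
    replace (eps / (2 * K)) with (/ (2 * K / eps)) by (field; lra).
    apply Rinv_le_contravar; [apply Rdiv_lt_0_compat; lra|exact Hbig]. }
  assert (Hx2 : Rpower x q2 <= Rpower x q1) by (apply Rle_Rpower_le_1; lra).
  assert (Hx12 : Rpower x (q1 + q2) <= Rpower x q1) by (apply Rle_Rpower_le_1; lra).
  pose proof (Rpower_pos x q1). pose proof (Rpower_pos x q2). pose proof (Rpower_pos x (q1 + q2)).
  unfold DeltaR. replace (Rpower x (q1 + q2) + a * Rpower x q2 + b * Rpower x q1 + c - c)
    with (Rpower x (q1 + q2) + a * Rpower x q2 + b * Rpower x q1) by ring.
  eapply Rle_lt_trans; [apply Rabs_triang|].
  eapply Rle_lt_trans; [apply Rplus_le_compat_r, Rabs_triang|].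
  rewrite !Rabs_mult, (Rabs_pos_eq (Rpower x (q1 + q2))), (Rabs_pos_eq (Rpower x q2)),
    (Rabs_pos_eq (Rpower x q1)) by lra.
  assert (Rabs a * Rpower x q2 <= Rabs a * Rpower x q1)
    by (apply Rmult_le_compat_l; [apply Rabs_pos|lra]).
  assert (K * Rpower x q1 <= K * (eps / (2 * K))) by (apply Rmult_le_compat_l; lra).
  replace (K * (eps / (2 * K))) with (eps / 2) in * by (field; lra).
  unfold K in *. nra.
Qed.

Lemma DeltaR_unbounded (a b c : R) : exists x, 1 <= x /\ 0 < DeltaR a b c x.
Proof.
  set (M := Rabs a + Rabs b + Rabs c + 1).
  destruct (Rpower_unbounded q1 M Hq1) as [x [Hx HM]]. exists x. split; [exact Hx|].
  assert (Hq12x : Rpower x q1 <= Rpower x q2) by (apply Rle_Rpower; lra).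
  assert (Hx2 : 1 <= Rpower x q2) by (apply Rpower_ge_1; lra).
  unfold DeltaR. rewrite Rpower_plus. pose proof (Rpower_pos x q1).
  pose proof (Rle_abs (- a)). pose proof (Rle_abs (- b)). pose proof (Rle_abs (- c)).
  rewrite !Rabs_Ropp in *.
  assert (0 <= (a + Rabs a) * Rpower x q2) by (apply Rmult_le_pos; lra).
  assert (0 <= (b + Rabs b) * Rpower x q1) by (apply Rmult_le_pos; lra).
  assert (Rabs b * Rpower x q1 <= Rabs b * Rpower x q2)
    by (apply Rmult_le_compat_l; [apply Rabs_pos|lra]).
  assert (M * Rpower x q2 <= Rpower x q1 * Rpower x q2) by (apply Rmult_le_compat_r; lra).
  assert (Rabs c * 1 <= Rabs c * Rpower x q2) by (apply Rmult_le_compat_l; [apply Rabs_pos|lra]).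
  unfold M in *. lra.
Qed.

Lemma DeltaR_root_of_c_neg (a b c : R) : c < 0 -> exists x, 0 < x /\ DeltaR a b c x = 0.
Proof.
  intros Hc. destruct (DeltaR_near_0 a b c (- c / 2)) as [x0 [Hx0 Hnear]]; [lra|].
  specialize (Hnear x0 ltac:(lra)). apply Rabs_def2 in Hnear.
  destruct (DeltaR_unbounded a b c) as [x1 [Hx1 Hpos]].
  destruct (IVT_le (DeltaR a b c) x0 x1 0) as [z [Hz Hfz]]; [lra| |lra|].
  - intros z Hz. apply continuity_pt_DeltaR. lra.
  - exists z. split; [lra|exact Hfz].
Qed.

Lemma Delta_im_pos (a b r t : R) : 0 <= a -> 0 <= b -> 0 < r -> 0 < t <= PI / 2 ->
  0 < Delta_im a b r t.
Proof.
  intros Ha Hb Hr Ht. unfold Delta_im. pose proof PI_RGT_0.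
  assert (0 < sin ((q1 + q2) * t)) by (apply sin_gt_0; nra).
  assert (0 <= sin (q2 * t)) by (apply sin_ge_0; nra).
  assert (0 <= sin (q1 * t)) by (apply sin_ge_0; nra).
  pose proof (Rpower_pos r (q1 + q2)). pose proof (Rpower_pos r q2). pose proof (Rpower_pos r q1).
  assert (0 < Rpower r (q1 + q2) * sin ((q1 + q2) * t)) by (apply Rmult_lt_0_compat; lra).
  assert (0 <= a * (Rpower r q2 * sin (q2 * t)))
    by (apply Rmult_le_pos; [|apply Rmult_le_pos]; lra).
  assert (0 <= b * (Rpower r q1 * sin (q1 * t)))
    by (apply Rmult_le_pos; [|apply Rmult_le_pos]; lra).
  lra.
Qed.

(* [sin (k t) / sin ((q2 - q1) t)], extended continuously by [k / (q2 - q1)] at [t = 0]. *)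
Definition sin_ratio (k t : R) : R := k * sinc (k * t) / ((q2 - q1) * sinc ((q2 - q1) * t)).

Definition sin_ratio' (k t : R) : R :=
  (k * cos (k * t) * sin ((q2 - q1) * t) - (q2 - q1) * sin (k * t) * cos ((q2 - q1) * t))
  / sin ((q2 - q1) * t) ^ 2.

Lemma sin_ratio_pos (k t : R) : 0 < k < 1 -> - PI < t < PI -> 0 < sin_ratio k t.
Proof.
  intros Hk Ht. unfold sin_ratio.
  pose proof (sinc_scal_pos k t Hk Ht). pose proof (sinc_scal_pos (q2 - q1) t ltac:(lra) Ht).
  apply Rdiv_lt_0_compat; apply Rmult_lt_0_compat; lra.
Qed.

Lemma sin_ratio_nz (k t : R) : 0 < k < 1 -> - PI < t < PI -> t <> 0 ->
  sin_ratio k t = sin (k * t) / sin ((q2 - q1) * t).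
Proof.
  intros Hk Ht Hnz. unfold sin_ratio.
  pose proof (sin_scal_neq_0 (q2 - q1) t ltac:(lra) Ht Hnz).
  rewrite !sinc_nz by (apply Rmult_integral_contrapositive; split; lra).
  field. repeat split; lra.
Qed.

Lemma sin_ratio_0 (k : R) : sin_ratio k 0 = k / (q2 - q1).
Proof. unfold sin_ratio, sinc. rewrite !Rmult_0_r. destruct (Req_EM_T 0 0); [|lra]. field. lra. Qed.

Lemma continuity_pt_sin_ratio (k t : R) : - PI < t < PI -> continuity_pt (sin_ratio k) t.
Proof.
  intros Ht. pose proof (sinc_scal_pos (q2 - q1) t ltac:(lra) Ht). unfold sin_ratio.
  apply (continuity_pt_div (fun t => k * sinc (k * t)) (fun t => (q2 - q1) * sinc ((q2 - q1) * t))).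
  - apply (continuity_pt_scal (fun t => sinc (k * t))), continuity_pt_sinc_scal.
  - apply (continuity_pt_scal (fun t => sinc ((q2 - q1) * t))), continuity_pt_sinc_scal.
  - apply Rgt_not_eq, Rmult_lt_0_compat; lra.
Qed.

Lemma is_derive_sin_ratio (k t : R) : 0 < k < 1 -> - PI < t < PI -> t <> 0 ->
  is_derive (sin_ratio k) t (sin_ratio' k t).
Proof.
  intros Hk Ht Hnz.
  apply is_derive_ext_loc with (f := fun y => sin (k * y) / sin ((q2 - q1) * y)).
  - eapply filter_imp;
      [|exact (filter_and _ _ (locally_open_interval _ _ t Ht) (locally_neq t 0 Hnz))].
    intros y [Hy Hy0]. now rewrite sin_ratio_nz.
  - pose proof (sin_scal_neq_0 (q2 - q1) t ltac:(lra) Ht Hnz).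
    unfold sin_ratio'. auto_derive; [exact H|]. field. exact H.
Qed.

(* With [m = (q1 + q2) / 2] and [h = (q2 - q1) / 2], [sin_ratio q1 - sin_ratio q2] is
   [- cos (m t) / cos (h t)], whose derivative is positive because [h < m]. *)
Lemma sin_ratio'_lt (t : R) : 0 < t <= PI / 2 -> sin_ratio' q2 t < sin_ratio' q1 t.
Proof.
  intros Ht. pose proof PI_RGT_0.
  set (m := (q1 + q2) / 2). set (h := (q2 - q1) / 2).
  assert (Hm : 0 < m * t < PI / 2) by (unfold m; split; nra).
  assert (Hh : 0 < h * t < PI / 2) by (unfold h; split; nra).
  assert (sM : 0 < sin (m * t)) by (apply sin_gt_0; lra).
  assert (sH : 0 < sin (h * t)) by (apply sin_gt_0; lra).
  assert (cH : 0 < cos (h * t)) by (apply cos_gt_0; lra).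
  assert (s1 : 0 < sin (m * t) * cos (h * t) - cos (m * t) * sin (h * t)).
  { rewrite <- sin_minus. apply sin_gt_0; unfold m, h; nra. }
  assert (sD : 0 < sin ((q2 - q1) * t)) by (apply sin_gt_0; nra).
  unfold sin_ratio'. apply Rmult_lt_reg_r with (sin ((q2 - q1) * t) ^ 2); [apply pow_lt; lra|].
  unfold Rdiv. rewrite !Rmult_assoc, Rinv_l, !Rmult_1_r by (apply pow_nonzero; lra).
  replace (q1 * t) with (m * t - h * t) by (unfold m, h; field).
  replace (q2 * t) with (m * t + h * t) by (unfold m, h; field).
  replace ((q2 - q1) * t) with (2 * (h * t)) by (unfold h; field).
  replace q1 with (m - h) by (unfold m, h; field).
  replace q2 with (m + h) by (unfold m, h; field).
  replace (m + h - (m - h)) with (2 * h) by ring.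
  rewrite sin_minus, sin_plus, cos_minus, cos_plus, sin_2a, cos_2a.
  assert (Hmh : 0 < m - h) by (unfold m, h; lra). assert (Hh0 : 0 < h) by (unfold h; lra).
  assert (0 < (m - h) * sin (m * t) * cos (h * t)).
  { apply Rmult_lt_0_compat; [apply Rmult_lt_0_compat|]; lra. }
  assert (0 < h * (sin (m * t) * cos (h * t) - cos (m * t) * sin (h * t)))
    by (apply Rmult_lt_0_compat; lra).
  assert (0 < 4 * sin (h * t) ^ 2) by (apply Rmult_lt_0_compat; [lra|apply pow_lt; lra]).
  apply Rlt_0_minus.
  match goal with |- 0 < ?e => replace e with
    (4 * sin (h * t) ^ 2 * ((m - h) * sin (m * t) * cos (h * t)
       + h * (sin (m * t) * cos (h * t) - cos (m * t) * sin (h * t)))) by ring end.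
  apply Rmult_lt_0_compat; lra.
Qed.

(* Multiplied by [t^2 sin (q2 - q1) t], the claim reads [u g u + w g w > (u + w) g (u + w)] with
   [u = q1 t], [w = (q2 - q1) t] and [g x = x cot x], which is decreasing. *)
Lemma sin_ratio_log_deriv_lt (t : R) : 0 < t <= PI / 2 ->
  q2 * sin_ratio q1 t * sin_ratio' q2 t < q1 * sin_ratio' q1 t * sin_ratio q2 t.
Proof.
  intros Ht. pose proof PI_RGT_0.
  assert (Ht' : - PI < t < PI) by lra.
  rewrite !sin_ratio_nz by lra. unfold sin_ratio'.
  set (u := q1 * t). set (v := q2 * t). set (w := (q2 - q1) * t).
  assert (Huv : v = u + w) by (unfold u, v, w; ring).
  assert (Hu : 0 < u) by (unfold u; nra). assert (Hw : 0 < w) by (unfold w; nra).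
  assert (Hv : v < PI / 2) by (unfold v; nra).
  assert (su : 0 < sin u) by (apply sin_gt_0; lra).
  assert (sv : 0 < sin v) by (apply sin_gt_0; lra).
  assert (sw : 0 < sin w) by (apply sin_gt_0; lra).
  pose proof (x_cot_decreasing u v Hu ltac:(lra) Hv) as Gu.
  pose proof (x_cot_decreasing w v Hw ltac:(lra) Hv) as Gw.
  assert (Key : 0 < u * (u * cos u / sin u) + w * (w * cos w / sin w) - v * (v * cos v / sin v)).
  { assert (v * (v * cos v / sin v) = u * (v * cos v / sin v) + w * (v * cos v / sin v))
      by (rewrite Huv at 1; ring).
    assert (u * (v * cos v / sin v) < u * (u * cos u / sin u)) by (apply Rmult_lt_compat_l; lra).
    assert (w * (v * cos v / sin v) < w * (w * cos w / sin w)) by (apply Rmult_lt_compat_l; lra).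
    lra. }
  apply Rlt_0_minus.
  apply Rmult_lt_reg_r with (t ^ 2 * sin w ^ 3 / (sin u * sin v * sin w));
    [apply Rdiv_lt_0_compat; [apply Rmult_lt_0_compat; apply pow_lt|]; try lra;
     apply Rmult_lt_0_compat; [apply Rmult_lt_0_compat|]; lra|].
  rewrite Rmult_0_l.
  match goal with |- 0 < ?e => replace e with
    (u * (u * cos u / sin u) + w * (w * cos w / sin w) - v * (v * cos v / sin v)) end;
    [exact Key|].
  unfold u, v, w. field. repeat split; try lra; fold u v w; lra.
Qed.

Section Positive_c.

Variables b c : R.
Hypothesis Hc : 0 < c.

Definition root_b (r t : R) : R :=
  sin_ratio q1 t * Rpower r q2 - c * sin_ratio q2 t * Rpower r (- q1).

Definition root_a (r t : R) : R :=
  c * sin_ratio q1 t * Rpower r (- q2) - sin_ratio q2 t * Rpower r q1.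

Lemma polar_root_iff (a r t : R) : 0 < r -> 0 < t < PI ->
  Delta_re a b c r t = 0 /\ Delta_im a b r t = 0 <-> b = root_b r t /\ a = root_a r t.
Proof.
  intros Hr Ht.
  assert (Hsd : 0 < sin ((q2 - q1) * t)) by (apply sin_gt_0; nra).
  pose proof (Delta_rotate a b c r t (q1 * t)) as R1.
  pose proof (Delta_rotate a b c r t (q2 * t)) as R2.
  replace ((q1 + q2) * t - q1 * t) with (q2 * t) in R1 by ring.
  replace (q2 * t - q1 * t) with ((q2 - q1) * t) in R1 by ring.
  replace ((q1 + q2) * t - q2 * t) with (q1 * t) in R2 by ring.
  replace (q1 * t - q2 * t) with (- ((q2 - q1) * t)) in R2 by ring.
  rewrite Rminus_diag, sin_0 in R1, R2. rewrite sin_neg in R2.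
  unfold root_b, root_a. rewrite !sin_ratio_nz, !Rpower_Ropp by lra.
  rewrite Rpower_plus in R1, R2.
  set (X := Rpower r q1) in *. set (Y := Rpower r q2) in *.
  assert (HX : 0 < X) by apply Rpower_pos. assert (HY : 0 < Y) by apply Rpower_pos.
  split.
  - intros [Hre Him]. rewrite Hre, Him in R1, R2. split.
    + apply (Rmult_eq_reg_r (X * sin ((q2 - q1) * t))); [|apply Rgt_not_eq; nra].
      transitivity (X * Y * sin (q1 * t) - c * sin (q2 * t)); [lra|field; lra].
    + apply (Rmult_eq_reg_r (Y * sin ((q2 - q1) * t))); [|apply Rgt_not_eq; nra].
      transitivity (c * sin (q1 * t) - X * Y * sin (q2 * t)); [lra|field; lra].
  - intros [Hb Ha].
    assert (E1 : Delta_im a b r t * cos (q1 * t) - Delta_re a b c r t * sin (q1 * t) = 0).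
    { rewrite R1, Ha. field. lra. }
    assert (E2 : Delta_im a b r t * cos (q2 * t) - Delta_re a b c r t * sin (q2 * t) = 0).
    { rewrite R2, Hb. field. lra. }
    replace ((q2 - q1) * t) with (q2 * t - q1 * t) in Hsd by ring.
    destruct (rotation_eq_0 _ _ _ _ (Rgt_not_eq _ _ Hsd) E1 E2). tauto.
Qed.

Lemma root_b_increasing (t r1 r2 : R) : - PI < t < PI -> 0 < r1 < r2 -> root_b r1 t < root_b r2 t.
Proof.
  intros Ht Hr. unfold root_b.
  pose proof (sin_ratio_pos q1 t ltac:(lra) Ht). pose proof (sin_ratio_pos q2 t ltac:(lra) Ht).
  pose proof (Rlt_Rpower_l r1 r2 q2 ltac:(lra) Hr). pose proof (Rpower_opp_lt q1 r1 r2 Hq1 Hr).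
  assert (0 < c * sin_ratio q2 t) by (apply Rmult_lt_0_compat; lra).
  nra.
Qed.

Lemma root_b_lt_inv (t r1 r2 : R) : - PI < t < PI -> 0 < r1 -> 0 < r2 ->
  root_b r1 t < root_b r2 t -> r1 < r2.
Proof.
  intros Ht H1 H2 Hlt. destruct (Rlt_or_le r1 r2) as [|Hle]; [assumption|exfalso].
  destruct (Rle_lt_or_eq_dec _ _ Hle) as [Hgt|Heq]; [|rewrite Heq in Hlt; lra].
  pose proof (root_b_increasing t r2 r1 Ht (conj H2 Hgt)). lra.
Qed.

Lemma continuity_pt_root_b_mod (t r : R) : 0 < r -> continuity_pt (fun r => root_b r t) r.
Proof.
  intros Hr. apply continuity_pt_of_ex_derive. unfold root_b, Rpower. auto_derive. lra.
Qed.

Lemma continuity_pt_root_b_arg (r t : R) : - PI < t < PI -> continuity_pt (root_b r) t.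
Proof.
  intros Ht. unfold root_b.
  apply (continuity_pt_minus (fun t => sin_ratio q1 t * Rpower r q2)
                             (fun t => c * sin_ratio q2 t * Rpower r (- q1))).
  - apply (continuity_pt_mult (sin_ratio q1) (fun _ => Rpower r q2));
      [now apply continuity_pt_sin_ratio|now apply continuity_pt_const].
  - apply (continuity_pt_mult (fun t => c * sin_ratio q2 t) (fun _ => Rpower r (- q1))).
    + apply (continuity_pt_scal (sin_ratio q2)). now apply continuity_pt_sin_ratio.
    + now apply continuity_pt_const.
Qed.

Lemma root_b_surjective (t : R) : - PI < t < PI -> exists r, 0 < r /\ root_b r t = b.
Proof.
  intros Ht. unfold root_b.
  pose proof (sin_ratio_pos q1 t ltac:(lra) Ht) as P1.
  pose proof (sin_ratio_pos q2 t ltac:(lra) Ht) as P2.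
  set (p1 := sin_ratio q1 t) in *. set (p2 := c * sin_ratio q2 t).
  assert (Hp2 : 0 < p2) by (apply Rmult_lt_0_compat; lra).
  pose proof (Rle_abs b). pose proof (Rle_abs (- b)). rewrite Rabs_Ropp in *.
  destruct (Rpower_unbounded q2 ((Rabs b + p2 + 1) / p1) ltac:(lra)) as [rhi [Hrhi Hhi]].
  destruct (Rpower_opp_unbounded q1 ((Rabs b + p1 + 1) / p2) Hq1) as [rlo [Hrlo Hlo]].
  assert (Bhi : b <= p1 * Rpower rhi q2 - p2 * Rpower rhi (- q1)).
  { assert (Rpower rhi (- q1) <= 1).
    { rewrite Rpower_Ropp, <- Rinv_1. apply Rinv_le_contravar; [lra|apply Rpower_ge_1; lra]. }
    assert (Rabs b + p2 + 1 <= p1 * Rpower rhi q2).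
    { replace (Rabs b + p2 + 1) with (p1 * ((Rabs b + p2 + 1) / p1)) by (field; lra).
      apply Rmult_le_compat_l; lra. }
    assert (p2 * Rpower rhi (- q1) <= p2 * 1) by (apply Rmult_le_compat_l; lra).
    lra. }
  assert (Blo : p1 * Rpower rlo q2 - p2 * Rpower rlo (- q1) <= b).
  { assert (p1 * Rpower rlo q2 <= p1 * 1)
      by (apply Rmult_le_compat_l; [lra|apply Rpower_le_1; lra]).
    assert (Rabs b + p1 + 1 <= p2 * Rpower rlo (- q1)).
    { replace (Rabs b + p1 + 1) with (p2 * ((Rabs b + p1 + 1) / p2)) by (field; lra).
      apply Rmult_le_compat_l; lra. }
    lra. }
  destruct (IVT_le (fun r => p1 * Rpower r q2 - p2 * Rpower r (- q1)) rlo rhi b)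
    as [r [Hr Hrb]]; [lra| |lra|].
  - intros r Hr. apply (continuity_pt_root_b_mod t r). lra.
  - exists r. split; [lra|exact Hrb].
Qed.

Definition root_mod (t : R) : R := epsilon (inhabits 1) (fun r => 0 < r /\ root_b r t = b).

Lemma root_mod_spec (t : R) : - PI < t < PI -> 0 < root_mod t /\ root_b (root_mod t) t = b.
Proof. intros Ht. unfold root_mod. apply epsilon_spec, root_b_surjective, Ht. Qed.

Lemma root_mod_unique (t r : R) : - PI < t < PI -> 0 < r -> root_b r t = b -> r = root_mod t.
Proof.
  intros Ht Hr Hb. destruct (root_mod_spec t Ht) as [HR HRb].
  destruct (Rtotal_order r (root_mod t)) as [Hlt|[Heq|Hgt]]; [|exact Heq|].
  - pose proof (root_b_increasing t r (root_mod t) Ht ltac:(lra)). lra.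
  - pose proof (root_b_increasing t (root_mod t) r Ht ltac:(lra)). lra.
Qed.

Lemma continuity_pt_root_mod (t0 : R) : - PI < t0 < PI -> continuity_pt root_mod t0.
Proof.
  intros Ht0. destruct (root_mod_spec t0 Ht0) as [HR0 HRb0].
  apply continuity_pt_locally. intros eps.
  set (R0 := root_mod t0) in *.
  set (rlo := R0 - Rmin eps (R0 / 2)). set (rhi := R0 + eps).
  pose proof (Rmin_r eps (R0 / 2)). pose proof (Rmin_l eps (R0 / 2)). pose proof (cond_pos eps).
  assert (0 < Rmin eps (R0 / 2)) by (apply Rmin_glb_lt; lra).
  assert (Blo : root_b rlo t0 < b) by (rewrite <- HRb0; apply root_b_increasing; unfold rlo; lra).
  assert (Bhi : b < root_b rhi t0) by (rewrite <- HRb0; apply root_b_increasing; unfold rhi; lra).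
  pose proof (locally_lt_of_continuity _ _ _ (continuity_pt_root_b_arg rlo t0 Ht0) Blo) as Llo.
  pose proof (locally_gt_of_continuity _ _ _ (continuity_pt_root_b_arg rhi t0 Ht0) Bhi) as Lhi.
  eapply filter_imp;
    [|exact (filter_and _ _ (filter_and _ _ Llo Lhi) (locally_open_interval _ _ _ Ht0))].
  simpl. intros t [[Ht1 Ht2] Ht].
  destruct (root_mod_spec t Ht) as [HR HRb].
  assert (rlo < root_mod t) by (apply (root_b_lt_inv t); [exact Ht|unfold rlo; lra|exact HR|lra]).
  assert (root_mod t < rhi) by (apply (root_b_lt_inv t); [exact Ht|exact HR|unfold rhi; lra|lra]).
  apply Rabs_def1; unfold rlo, rhi in *; lra.
Qed.

(* Implicit differentiation of [root_b (root_mod t) t = b]. *)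
Definition root_mod' (t : R) : R :=
  let r := root_mod t in
  - (sin_ratio' q1 t * Rpower r q2 - c * sin_ratio' q2 t * Rpower r (- q1))
  / (sin_ratio q1 t * (q2 * (Rpower r q2 / r))
     - c * sin_ratio q2 t * (- q1 * (Rpower r (- q1) / r))).

Definition pow_slope (q r0 : R) : R -> R := slope (fun r => Rpower r q) r0 (q * (Rpower r0 q / r0)).

Definition ratio_slope (k t0 : R) : R -> R := slope (sin_ratio k) t0 (sin_ratio' k t0).

Definition root_mod_den (t0 t : R) : R :=
  sin_ratio q1 t * pow_slope q2 (root_mod t0) (root_mod t)
  - c * sin_ratio q2 t * pow_slope (- q1) (root_mod t0) (root_mod t).

Definition root_mod_num (t0 t : R) : R :=
  ratio_slope q1 t0 t * Rpower (root_mod t0) q2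
  - c * ratio_slope q2 t0 t * Rpower (root_mod t0) (- q1).

Lemma root_mod'_slopes (t : R) : root_mod' t = - root_mod_num t t / root_mod_den t t.
Proof.
  unfold root_mod', root_mod_num, root_mod_den, pow_slope, ratio_slope, slope.
  destruct (Req_EM_T t t) as [_|]; [|lra].
  destruct (Req_EM_T (root_mod t) (root_mod t)) as [_|]; [|lra].
  reflexivity.
Qed.

Lemma root_mod_den_pos (t0 t : R) : - PI < t0 < PI -> - PI < t < PI -> 0 < root_mod_den t0 t.
Proof.
  intros Ht0 Ht.
  destruct (root_mod_spec t0 Ht0) as [HR0 _]. destruct (root_mod_spec t Ht) as [HR _].
  assert (0 < pow_slope q2 (root_mod t0) (root_mod t)).
  { apply slope_pos; [apply Rmult_lt_0_compat, Rdiv_lt_0_compat; try apply Rpower_pos; lra| |];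
      intros; apply Rlt_Rpower_l; lra. }
  assert (pow_slope (- q1) (root_mod t0) (root_mod t) < 0).
  { apply slope_neg.
    - assert (0 < q1 * (Rpower (root_mod t0) (- q1) / root_mod t0))
        by (apply Rmult_lt_0_compat, Rdiv_lt_0_compat; try apply Rpower_pos; lra).
      lra.
    - intros; apply Rpower_opp_lt; lra.
    - intros; apply Rpower_opp_lt; lra. }
  pose proof (sin_ratio_pos q1 t ltac:(lra) Ht). pose proof (sin_ratio_pos q2 t ltac:(lra) Ht).
  assert (0 < c * sin_ratio q2 t) by (apply Rmult_lt_0_compat; lra).
  unfold root_mod_den. nra.
Qed.

Lemma root_mod_factorization (t0 t : R) : - PI < t0 < PI -> - PI < t < PI ->
  (root_mod t - root_mod t0) * root_mod_den t0 t + (t - t0) * root_mod_num t0 t = 0.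
Proof.
  intros Ht0 Ht.
  destruct (root_mod_spec t0 Ht0) as [_ HRb0]. destruct (root_mod_spec t Ht) as [_ HRb].
  set (R0 := root_mod t0) in *. set (Rt := root_mod t) in *.
  pose proof (slope_spec (fun r => Rpower r q2) R0 (q2 * (Rpower R0 q2 / R0)) Rt) as E1.
  pose proof (slope_spec (fun r => Rpower r (- q1)) R0 (- q1 * (Rpower R0 (- q1) / R0)) Rt) as E2.
  pose proof (slope_spec (sin_ratio q1) t0 (sin_ratio' q1 t0) t) as E3.
  pose proof (slope_spec (sin_ratio q2) t0 (sin_ratio' q2 t0) t) as E4.
  simpl in E1, E2. rewrite <- (Rminus_diag b). rewrite <- HRb at 1. rewrite <- HRb0.
  unfold root_b, root_mod_den, root_mod_num, pow_slope, ratio_slope. fold R0 Rt.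
  replace (Rpower Rt q2) with (Rpower R0 q2 + (Rpower Rt q2 - Rpower R0 q2)) by ring.
  replace (Rpower Rt (- q1))
    with (Rpower R0 (- q1) + (Rpower Rt (- q1) - Rpower R0 (- q1))) by ring.
  replace (sin_ratio q1 t) with (sin_ratio q1 t0 + (sin_ratio q1 t - sin_ratio q1 t0)) by ring.
  replace (sin_ratio q2 t) with (sin_ratio q2 t0 + (sin_ratio q2 t - sin_ratio q2 t0)) by ring.
  rewrite E1, E2, E3, E4. ring.
Qed.

Lemma continuity_pt_root_mod_num (t0 : R) : - PI < t0 < PI -> t0 <> 0 ->
  continuity_pt (root_mod_num t0) t0.
Proof.
  intros Ht0 Hnz.
  assert (C : forall k, 0 < k < 1 -> continuity_pt (ratio_slope k t0) t0)
    by (intros; apply continuity_pt_slope, is_derive_Reals, is_derive_sin_ratio; assumption).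
  unfold root_mod_num.
  apply (continuity_pt_minus (fun t => ratio_slope q1 t0 t * Rpower (root_mod t0) q2)
                             (fun t => c * ratio_slope q2 t0 t * Rpower (root_mod t0) (- q1))).
  - apply (continuity_pt_mult _ (fun _ => Rpower (root_mod t0) q2));
      [apply C; lra|now apply continuity_pt_const].
  - apply (continuity_pt_mult (fun t => c * ratio_slope q2 t0 t)
                               (fun _ => Rpower (root_mod t0) (- q1)));
      [|now apply continuity_pt_const].
    apply (continuity_pt_scal (ratio_slope q2 t0)), C. lra.
Qed.

Lemma continuity_pt_root_mod_den (t0 : R) : - PI < t0 < PI -> continuity_pt (root_mod_den t0) t0.
Proof.
  intros Ht0. destruct (root_mod_spec t0 Ht0) as [HR0 _].
  assert (C : forall q, continuity_pt (fun t => pow_slope q (root_mod t0) (root_mod t)) t0).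
  { intros q. apply (continuity_pt_comp root_mod); [now apply continuity_pt_root_mod|].
    apply continuity_pt_slope, is_derive_Reals, is_derive_Rpower, HR0. }
  unfold root_mod_den.
  apply (continuity_pt_minus
    (fun t => sin_ratio q1 t * pow_slope q2 (root_mod t0) (root_mod t))
    (fun t => c * sin_ratio q2 t * pow_slope (- q1) (root_mod t0) (root_mod t))).
  - apply (continuity_pt_mult (sin_ratio q1)); [now apply continuity_pt_sin_ratio|apply C].
  - apply (continuity_pt_mult (fun t => c * sin_ratio q2 t)); [|apply C].
    apply (continuity_pt_scal (sin_ratio q2)). now apply continuity_pt_sin_ratio.
Qed.

Lemma is_derive_root_mod (t0 : R) : - PI < t0 < PI -> t0 <> 0 ->
  is_derive root_mod t0 (root_mod' t0).
Proof.
  intros Ht0 Hnz. rewrite root_mod'_slopes.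
  apply (is_derive_of_factorization root_mod (fun t => - root_mod_num t0 t / root_mod_den t0 t)).
  - eapply filter_imp; [|exact (locally_open_interval _ _ _ Ht0)]. intros t Ht.
    pose proof (root_mod_den_pos t0 t Ht0 Ht). pose proof (root_mod_factorization t0 t Ht0 Ht).
    apply (Rmult_eq_reg_r (root_mod_den t0 t)); [|lra].
    replace ((t - t0) * (- root_mod_num t0 t / root_mod_den t0 t) * root_mod_den t0 t)
      with (- ((t - t0) * root_mod_num t0 t)) by (field; lra).
    lra.
  - apply (continuity_pt_div (fun t => - root_mod_num t0 t) (root_mod_den t0)).
    + apply (continuity_pt_opp (root_mod_num t0)). now apply continuity_pt_root_mod_num.
    + now apply continuity_pt_root_mod_den.
    + apply Rgt_not_eq, root_mod_den_pos; assumption.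
Qed.

Definition a_of_arg (t : R) : R := root_a (root_mod t) t.

Definition a_of_arg' (t : R) : R :=
  let r := root_mod t in
  c * (sin_ratio' q1 t * Rpower r (- q2)
       + sin_ratio q1 t * (- q2 * (Rpower r (- q2) / r) * root_mod' t))
  - (sin_ratio' q2 t * Rpower r q1 + sin_ratio q2 t * (q1 * (Rpower r q1 / r) * root_mod' t)).

Lemma is_derive_a_of_arg (t : R) : - PI < t < PI -> t <> 0 -> is_derive a_of_arg t (a_of_arg' t).
Proof.
  intros Ht Hnz. destruct (root_mod_spec t Ht) as [HR _].
  pose proof (is_derive_root_mod t Ht Hnz) as DR.
  pose proof (is_derive_sin_ratio q1 t ltac:(lra) Ht Hnz) as D1.
  pose proof (is_derive_sin_ratio q2 t ltac:(lra) Ht Hnz) as D2.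
  unfold a_of_arg, root_a. unfold Rpower at 1 2.
  auto_derive; [repeat split; try (eexists; eassumption); exact HR|].
  replace (Derive (fun x => root_mod x) t) with (root_mod' t)
    by (symmetry; now apply is_derive_unique).
  replace (Derive (fun x => sin_ratio q1 x) t) with (sin_ratio' q1 t)
    by (symmetry; now apply is_derive_unique).
  replace (Derive (fun x => sin_ratio q2 x) t) with (sin_ratio' q2 t)
    by (symmetry; now apply is_derive_unique).
  unfold a_of_arg', Rpower. field. lra.
Qed.

Lemma continuity_pt_a_of_arg (t : R) : - PI < t < PI -> continuity_pt a_of_arg t.
Proof.
  intros Ht. destruct (root_mod_spec t Ht) as [HR _]. unfold a_of_arg, root_a.
  assert (Cpow : forall y, continuity_pt (fun s => Rpower (root_mod s) y) t).
  { intros y. apply (continuity_pt_comp root_mod (fun r => Rpower r y));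
      [now apply continuity_pt_root_mod|now apply continuity_pt_Rpower]. }
  apply (continuity_pt_minus (fun s => c * sin_ratio q1 s * Rpower (root_mod s) (- q2))
                             (fun s => sin_ratio q2 s * Rpower (root_mod s) q1)).
  - apply (continuity_pt_mult (fun s => c * sin_ratio q1 s) (fun s => Rpower (root_mod s) (- q2)));
      [|apply Cpow].
    apply (continuity_pt_scal (sin_ratio q1)). now apply continuity_pt_sin_ratio.
  - apply (continuity_pt_mult (sin_ratio q2) (fun s => Rpower (root_mod s) q1));
      [now apply continuity_pt_sin_ratio|apply Cpow].
Qed.

(* Clearing denominators turns [a_of_arg' t] into a positive combination of
   [sin_ratio' q1 t - sin_ratio' q2 t] and of the difference in [sin_ratio_log_deriv_lt]. *)
Lemma a_of_arg'_pos (t : R) : 0 < t <= PI / 2 -> 0 < a_of_arg' t.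
Proof.
  intros Ht. pose proof PI_RGT_0. assert (Ht' : - PI < t < PI) by lra.
  destruct (root_mod_spec t Ht') as [HR _].
  pose proof (sin_ratio'_lt t Ht) as Dlt. pose proof (sin_ratio_log_deriv_lt t Ht) as Klt.
  pose proof (sin_ratio_pos q1 t ltac:(lra) Ht') as P1.
  pose proof (sin_ratio_pos q2 t ltac:(lra) Ht') as P2.
  unfold a_of_arg', root_mod'. cbv zeta. rewrite !Rpower_Ropp.
  set (r := root_mod t) in *. set (X := Rpower r q1). set (Y := Rpower r q2).
  assert (HX : 0 < X) by apply Rpower_pos. assert (HY : 0 < Y) by apply Rpower_pos.
  set (p1 := sin_ratio q1 t) in *. set (p2 := sin_ratio q2 t) in *.
  set (d1 := sin_ratio' q1 t) in *. set (d2 := sin_ratio' q2 t) in *.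
  clearbody X Y p1 p2 d1 d2.
  assert (0 < q2 * p1 * Y * X + c * q1 * p2).
  { assert (0 < q2 * p1 * Y * X) by (repeat apply Rmult_lt_0_compat; lra).
    assert (0 < c * q1 * p2) by (repeat apply Rmult_lt_0_compat; lra). lra. }
  match goal with |- 0 < ?e => replace e with
    ((2 * c * X * Y * ((d1 - d2) * (q2 * p1 + q1 * p2))
      + (X * Y - c) ^ 2 * (q1 * d1 * p2 - q2 * p1 * d2))
     / ((q2 * p1 * Y * X + c * q1 * p2) * Y))
    by (field; repeat split; lra) end.
  apply Rdiv_lt_0_compat; [|apply Rmult_lt_0_compat; lra].
  assert (0 < 2 * c * X * Y * ((d1 - d2) * (q2 * p1 + q1 * p2))).
  { repeat apply Rmult_lt_0_compat; try lra. nra. }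
  assert (0 <= (X * Y - c) ^ 2 * (q1 * d1 * p2 - q2 * p1 * d2))
    by (apply Rmult_le_pos; [apply pow2_ge_0|lra]).
  lra.
Qed.

(* [a_of_arg'] is the derivative only away from [0]; any positive value will do at [0]. *)
Lemma a_of_arg_increasing (t1 t2 : R) : 0 <= t1 -> t1 < t2 -> t2 <= PI / 2 ->
  a_of_arg t1 < a_of_arg t2.
Proof.
  intros H1 H12 H2. pose proof PI_RGT_0.
  destruct (MVT_gen a_of_arg t1 t2 (fun t => if Rlt_dec 0 t then a_of_arg' t else 1)) as [z [Hz E]].
  - intros z Hz. rewrite Rmin_left, Rmax_right in Hz by lra.
    destruct (Rlt_dec 0 z); [|exfalso; lra].
    apply is_derive_a_of_arg; [lra|apply Rgt_not_eq; lra].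
  - intros z Hz. rewrite Rmin_left, Rmax_right in Hz by lra. apply continuity_pt_a_of_arg. lra.
  - rewrite Rmin_left, Rmax_right in Hz by lra. destruct (Rlt_dec 0 z) as [Hz0|]; [|nra].
    pose proof (a_of_arg'_pos z ltac:(lra)). nra.
Qed.

Lemma sin_ratio_PI2 (k : R) : 0 < k < 1 ->
  sin_ratio k (PI / 2) = sin (k * PI / 2) / sin ((q2 - q1) * PI / 2).
Proof.
  intros Hk. pose proof PI_RGT_0. rewrite sin_ratio_nz by lra.
  unfold Rdiv. rewrite !Rmult_assoc. reflexivity.
Qed.

Lemma root_b_PI2 (r : R) : root_b r (PI / 2) = curve_b c q1 q2 r.
Proof. unfold root_b, curve_b, rho1, rho2. rewrite !sin_ratio_PI2 by lra. ring. Qed.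

Lemma root_a_PI2 (r : R) : root_a r (PI / 2) = curve_a c q1 q2 r.
Proof. unfold root_a, curve_a, rho1, rho2. rewrite !sin_ratio_PI2 by lra. ring. Qed.

Lemma a_star_eq : a_star b c q1 q2 = a_of_arg (PI / 2).
Proof.
  pose proof PI_RGT_0. assert (HPI2 : - PI < PI / 2 < PI) by lra.
  unfold a_star. set (w := epsilon _ _).
  assert (Hw : 0 < w /\ curve_b c q1 q2 w = b).
  { unfold w. apply epsilon_spec. destruct (root_mod_spec _ HPI2) as [HR HRb].
    exists (root_mod (PI / 2)). rewrite <- root_b_PI2. auto. }
  destruct Hw as [Hw Hwb]. rewrite <- root_b_PI2 in Hwb.
  unfold a_of_arg. rewrite <- (root_mod_unique _ _ HPI2 Hw Hwb). apply eq_sym, root_a_PI2.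
Qed.

(* In the variable [y = x / root_mod 0], [DeltaR (a_of_arg 0) b c x] is a positive combination of
   two instances of [Rpower_young] (with exponents [q2 - q1 < q2] and [q1 < q2]), both vanishing
   at [y = 1]. *)
Lemma DeltaR_a_of_arg_0_decomp (x : R) : 0 < x ->
  let r := root_mod 0 in let y := x / r in
  DeltaR (a_of_arg 0) b c x =
    Rpower r (q1 + q2) * Rpower y q1 / (q2 - q1)
      * ((q2 - q1) * Rpower y q2 - q2 * Rpower y (q2 - q1) + q1)
    + c / (q2 - q1) * (q1 * Rpower y q2 - q2 * Rpower y q1 + (q2 - q1)).
Proof.
  intros Hx r y. assert (H0 : - PI < 0 < PI) by (pose proof PI_RGT_0; lra).
  destruct (root_mod_spec 0 H0) as [HR HRb]. fold r in HR, HRb.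
  assert (Hy : 0 < y) by (apply Rdiv_lt_0_compat; lra).
  assert (Pw : forall q, Rpower x q = Rpower r q * Rpower y q).
  { intros q. replace x with (r * y) by (unfold y; field; lra). now rewrite Rpower_mult_distr. }
  unfold DeltaR, a_of_arg, root_a. fold r. rewrite <- HRb. unfold root_b.
  rewrite !sin_ratio_0, !Pw, !Rpower_Ropp, !Rpower_plus.
  replace (Rpower y q2) with (Rpower y q1 * Rpower y (q2 - q1))
    by (rewrite <- Rpower_plus; f_equal; ring).
  pose proof (Rpower_pos r q1). pose proof (Rpower_pos r q2).
  field. repeat split; lra.
Qed.

Lemma DeltaR_a_of_arg_0_nonneg (x : R) : 0 < x -> 0 <= DeltaR (a_of_arg 0) b c x.
Proof.
  intros Hx. rewrite DeltaR_a_of_arg_0_decomp by exact Hx. cbv zeta.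
  assert (HR : 0 < root_mod 0) by (apply root_mod_spec; pose proof PI_RGT_0; lra).
  set (y := x / root_mod 0). assert (Hy : 0 < y) by (apply Rdiv_lt_0_compat; lra).
  pose proof (Rpower_young y (q2 - q1) q2 Hy ltac:(lra)).
  pose proof (Rpower_young y q1 q2 Hy ltac:(lra)).
  pose proof (Rpower_pos (root_mod 0) (q1 + q2)). pose proof (Rpower_pos y q1).
  apply Rplus_le_le_0_compat; apply Rmult_le_pos.
  - apply Rlt_le, Rdiv_lt_0_compat; [apply Rmult_lt_0_compat|]; lra.
  - replace (q2 - (q2 - q1)) with q1 in * by ring. lra.
  - apply Rlt_le, Rdiv_lt_0_compat; lra.
  - lra.
Qed.

Lemma DeltaR_a_of_arg_0_root : DeltaR (a_of_arg 0) b c (root_mod 0) = 0.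
Proof.
  assert (HR : 0 < root_mod 0) by (apply root_mod_spec; pose proof PI_RGT_0; lra).
  rewrite DeltaR_a_of_arg_0_decomp by exact HR. cbv zeta.
  rewrite Rdiv_diag, !Rpower_1_l by lra. ring.
Qed.

Lemma pos_real_root_le (a x : R) : 0 < x -> DeltaR a b c x = 0 -> a <= a_of_arg 0.
Proof.
  intros Hx Hroot. pose proof (DeltaR_a_of_arg_0_nonneg x Hx). pose proof (Rpower_pos x q2).
  assert (E : DeltaR a b c x = DeltaR (a_of_arg 0) b c x + (a - a_of_arg 0) * Rpower x q2)
    by (unfold DeltaR; ring).
  destruct (Rle_or_lt a (a_of_arg 0)) as [|Hlt]; [assumption|].
  assert (0 < (a - a_of_arg 0) * Rpower x q2) by (apply Rmult_lt_0_compat; lra). lra.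
Qed.

Lemma pos_real_root_of_le (a : R) : a <= a_of_arg 0 -> exists x, 0 < x /\ DeltaR a b c x = 0.
Proof.
  intros Ha. assert (HR : 0 < root_mod 0) by (apply root_mod_spec; pose proof PI_RGT_0; lra).
  assert (HR0 : DeltaR a b c (root_mod 0) <= 0).
  { replace (DeltaR a b c (root_mod 0))
      with (DeltaR (a_of_arg 0) b c (root_mod 0) + (a - a_of_arg 0) * Rpower (root_mod 0) q2)
      by (unfold DeltaR; ring).
    rewrite DeltaR_a_of_arg_0_root. pose proof (Rpower_pos (root_mod 0) q2).
    assert ((a - a_of_arg 0) * Rpower (root_mod 0) q2 <= 0) by (apply Rmult_le_0_r; lra). lra. }
  destruct (DeltaR_near_0 a b c c Hc) as [del [Hdel Hnear]].
  set (x0 := Rmin del (root_mod 0)).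
  assert (Hx0 : 0 < x0 <= root_mod 0) by (split; [apply Rmin_glb_lt|apply Rmin_r]; lra).
  specialize (Hnear x0 ltac:(split; [lra|apply Rmin_l])). apply Rabs_def2 in Hnear.
  destruct (IVT_le (fun x => - DeltaR a b c x) x0 (root_mod 0) 0) as [z [Hz Hfz]]; [lra| |lra|].
  - intros z Hz. apply (continuity_pt_opp (DeltaR a b c)), continuity_pt_DeltaR. lra.
  - exists z. split; lra.
Qed.

Lemma origin_not_root (a : R) : DeltaQ q1 q2 a b c (0, 0) <> 0.
Proof. change (0, 0) with (RtoC 0). rewrite DeltaQ_0. intros E. injection E. lra. Qed.

Lemma upper_root_a_of_arg (a x y : R) : 0 < y -> DeltaQ q1 q2 a b c (x, y) = 0 ->
  a = a_of_arg (Carg (x, y)).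
Proof.
  intros Hy Hroot. pose proof (Carg_upper_bound x y Hy) as Harg. pose proof PI_RGT_0.
  assert (Hm : 0 < Cmod (x, y)) by (apply Cmod_pos_of_im, Rgt_not_eq, Hy).
  apply DeltaQ_eq_0_polar in Hroot; [|exact Hm].
  apply polar_root_iff in Hroot; [|exact Hm|exact Harg]. destruct Hroot as [Hb Ha].
  unfold a_of_arg. rewrite <- (root_mod_unique (Carg (x, y)) _ ltac:(lra) Hm (eq_sym Hb)). exact Ha.
Qed.

Lemma root_of_a_of_arg (t : R) : 0 < t < PI ->
  DeltaQ q1 q2 (a_of_arg t) b c (root_mod t * cos t, root_mod t * sin t) = 0.
Proof.
  intros Ht. destruct (root_mod_spec t ltac:(lra)) as [HR HRb].
  apply DeltaQ_eq_0_polar; rewrite Cmod_polar by exact HR; [exact HR|].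
  rewrite Carg_polar by assumption. apply polar_root_iff; [exact HR|exact Ht|].
  split; [now rewrite HRb|reflexivity].
Qed.

Lemma upper_right_root_le (a x y : R) : 0 <= x -> 0 < y -> DeltaQ q1 q2 a b c (x, y) = 0 ->
  a <= a_star b c q1 q2 /\ (0 < x -> a < a_star b c q1 q2).
Proof.
  intros Hx Hy Hroot. rewrite (upper_root_a_of_arg a x y Hy Hroot), a_star_eq.
  pose proof (Carg_upper_bound x y Hy) as Hpos. pose proof (Carg_upper_right_le x y Hy Hx) as Hle.
  split.
  - destruct (Rle_lt_or_eq_dec _ _ Hle) as [Hlt|Heq]; [|rewrite Heq; lra].
    left. apply a_of_arg_increasing; lra.
  - intros Hx'. pose proof (Carg_upper_right_lt x y Hy Hx'). apply a_of_arg_increasing; lra.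
Qed.

Lemma closed_right_root_le (a x y : R) : 0 <= x -> DeltaQ q1 q2 a b c (x, y) = 0 ->
  a <= a_star b c q1 q2 /\ (0 < x -> a < a_star b c q1 q2).
Proof.
  intros Hx Hroot. destruct (Rtotal_order y 0) as [Hy|[->|Hy]].
  - apply (upper_right_root_le a x (- y)); [exact Hx|lra|].
    apply DeltaQ_conj_eq_0; [lra|exact Hroot].
  - destruct (Rle_lt_or_eq_dec _ _ Hx) as [Hx'|<-].
    + rewrite DeltaQ_pos_real in Hroot by exact Hx'. injection Hroot as Hroot.
      pose proof (pos_real_root_le a x Hx' Hroot).
      pose proof PI_RGT_0.
      pose proof (a_of_arg_increasing 0 (PI / 2) ltac:(lra) ltac:(lra) ltac:(lra)).
      rewrite a_star_eq. split; intros; lra.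
    + destruct (origin_not_root a Hroot).
  - exact (upper_right_root_le a x y Hx Hy Hroot).
Qed.

Lemma right_root_of_lt_a_star (a : R) : a < a_star b c q1 q2 ->
  exists x y, 0 < x /\ 0 <= y /\ DeltaQ q1 q2 a b c (x, y) = 0.
Proof.
  intros Ha. rewrite a_star_eq in Ha. pose proof PI_RGT_0.
  destruct (Rle_or_lt a (a_of_arg 0)) as [Ha0|Ha0].
  - destruct (pos_real_root_of_le a Ha0) as [x [Hx Hroot]]. exists x, 0.
    repeat split; [exact Hx|lra|]. rewrite DeltaQ_pos_real, Hroot by exact Hx. reflexivity.
  - destruct (IVT_le a_of_arg 0 (PI / 2) a) as [t [Ht Hat]]; [lra| |lra|].
    + intros t Ht. apply continuity_pt_a_of_arg. lra.
    + assert (Ht0 : t <> 0) by (intros ->; lra).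
      assert (Ht1 : t <> PI / 2) by (intros ->; lra).
      destruct (root_mod_spec t ltac:(lra)) as [HR _].
      assert (0 < cos t) by (apply cos_gt_0; lra). assert (0 < sin t) by (apply sin_gt_0; lra).
      exists (root_mod t * cos t), (root_mod t * sin t). repeat split.
      * now apply Rmult_lt_0_compat.
      * now apply Rlt_le, Rmult_lt_0_compat.
      * rewrite <- Hat. apply root_of_a_of_arg. lra.
Qed.

(* Near [a_star] the root has argument [arg a = PI / 2 - atan (x a / y a)] and
   [a_of_arg (arg a) = a]; differentiating at [a_star] gives [1 = - x' / y * a_of_arg' (PI / 2)]. *)
Lemma transversality_upper (x y : R -> R) :
  locally (a_star b c q1 q2) (fun a => DeltaQ q1 q2 a b c (x a, y a) = 0) ->
  ex_derive x (a_star b c q1 q2) -> ex_derive y (a_star b c q1 q2) ->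
  x (a_star b c q1 q2) = 0 -> 0 < y (a_star b c q1 q2) ->
  Derive x (a_star b c q1 q2) < 0.
Proof.
  set (A := a_star b c q1 q2). intros Hroots Dx Dy Hx0 Hy0. pose proof PI_RGT_0.
  assert (Hpos : locally A (fun a => 0 < y a))
    by (apply locally_gt_of_continuity; [now apply continuity_pt_of_ex_derive|exact Hy0]).
  set (arg := fun a => PI / 2 - atan (x a / y a)).
  assert (Harg : locally A (fun a => a_of_arg (arg a) = a)).
  { eapply filter_imp; [|exact (filter_and _ _ Hroots Hpos)]. intros a [Hroot Hya].
    unfold arg. rewrite <- Carg_upper by exact Hya.
    symmetry. now apply upper_root_a_of_arg. }
  assert (Harg0 : arg A = PI / 2) by (unfold arg; rewrite Hx0, Rdiv_0_l, atan_0; ring).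
  assert (Darg : is_derive arg A (- Derive x A / y A)).
  { unfold arg. auto_derive; [repeat split; [exact Dx|exact Dy|lra]|].
    change (fun x0 => x x0) with x. rewrite Hx0. field. lra. }
  assert (Dcomp :
    is_derive (fun a => a_of_arg (arg a)) A (- Derive x A / y A * a_of_arg' (PI / 2))).
  { apply (is_derive_comp a_of_arg arg). rewrite Harg0. apply is_derive_a_of_arg; lra. exact Darg. }
  assert (Did : is_derive (fun a => a_of_arg (arg a)) A 1).
  { apply is_derive_ext_loc with (f := fun a => a); [|apply is_derive_Reals, derivable_pt_lim_id].
    eapply filter_imp; [|exact Harg]. intros a Ha. now rewrite Ha. }
  pose proof (is_derive_unique _ _ _ Dcomp) as U. rewrite (is_derive_unique _ _ _ Did) in U.
  pose proof (a_of_arg'_pos (PI / 2) ltac:(lra)).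
  destruct (Rlt_or_le (Derive x A) 0) as [|Hge]; [assumption|].
  assert (- Derive x A / y A <= 0) by (apply Rmult_le_0_r; [lra|left; now apply Rinv_0_lt_compat]).
  assert (- Derive x A / y A * a_of_arg' (PI / 2) <= 0) by (apply Rmult_le_0_r; lra).
  lra.
Qed.

Lemma roots_left_of_nonneg_coeffs (a : R) : 0 <= a -> 0 <= b ->
  forall s : C, DeltaQ q1 q2 a b c s = 0 -> Re s < 0.
Proof.
  intros Ha Hb [x y] Hroot. simpl. destruct (Rlt_or_le x 0) as [|Hx]; [assumption|exfalso].
  assert (Upper : forall y, 0 < y -> DeltaQ q1 q2 a b c (x, y) <> 0).
  { intros y' Hy' Hroot'.
    apply DeltaQ_eq_0_polar in Hroot'; [|now apply Cmod_pos_of_im, Rgt_not_eq].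
    destruct Hroot' as [_ Him]. pose proof (Carg_upper_bound x y' Hy').
    pose proof (Carg_upper_right_le x y' Hy' Hx).
    pose proof (Delta_im_pos a b (Cmod (x, y')) (Carg (x, y')) Ha Hb
      ltac:(now apply Cmod_pos_of_im, Rgt_not_eq) ltac:(lra)). lra. }
  destruct (Rtotal_order y 0) as [Hy|[->|Hy]].
  - apply (Upper (- y)); [lra|]. apply DeltaQ_conj_eq_0; [lra|exact Hroot].
  - destruct (Rle_lt_or_eq_dec _ _ Hx) as [Hx'|<-].
    + rewrite DeltaQ_pos_real in Hroot by exact Hx'. injection Hroot as Hroot.
      unfold DeltaR in Hroot.
      pose proof (Rpower_pos x (q1 + q2)).
      pose proof (Rpower_pos x q2). pose proof (Rpower_pos x q1).
      assert (0 <= a * Rpower x q2) by (apply Rmult_le_pos; lra).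
      assert (0 <= b * Rpower x q1) by (apply Rmult_le_pos; lra). lra.
    + destruct (origin_not_root a Hroot).
  - exact (Upper y Hy Hroot).
Qed.

Lemma imaginary_roots_iff (a : R) :
  (exists w, 0 < w /\ DeltaQ q1 q2 a b c (0, w) = 0 /\ DeltaQ q1 q2 a b c (0, - w) = 0)
  <-> a = a_star b c q1 q2.
Proof.
  pose proof PI_RGT_0. split.
  - intros [w [Hw [Hroot _]]]. rewrite (upper_root_a_of_arg a 0 w Hw Hroot), a_star_eq.
    rewrite Carg_upper, Rdiv_0_l, atan_0, Rminus_0_r by exact Hw. reflexivity.
  - intros ->. rewrite a_star_eq. destruct (root_mod_spec (PI / 2) ltac:(lra)) as [HR _].
    pose proof (root_of_a_of_arg (PI / 2) ltac:(lra)) as Hroot.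
    rewrite cos_PI2, sin_PI2, Rmult_0_r, Rmult_1_r in Hroot.
    exists (root_mod (PI / 2)). repeat split; [exact HR|exact Hroot|].
    apply DeltaQ_conj_eq_0; [lra|exact Hroot].
Qed.

Lemma transversality (s : R -> C) :
  (exists eps, 0 < eps /\ forall a, Rabs (a - a_star b c q1 q2) < eps ->
     DeltaQ q1 q2 a b c (s a) = 0) ->
  ex_derive (fun a => Re (s a)) (a_star b c q1 q2) ->
  ex_derive (fun a => Im (s a)) (a_star b c q1 q2) ->
  Re (s (a_star b c q1 q2)) = 0 ->
  Derive (fun a => Re (s a)) (a_star b c q1 q2) < 0.
Proof.
  set (A := a_star b c q1 q2). intros [eps [Heps Hs]] Dx Dy Hx0.
  set (x := fun a => Re (s a)) in *. set (y := fun a => Im (s a)) in *. change (x A = 0) in Hx0.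
  assert (Hroots : locally A (fun a => DeltaQ q1 q2 a b c (x a, y a) = 0)).
  { exists (mkposreal eps Heps). intros a Ha. unfold x, y, Re, Im. rewrite <- surjective_pairing.
    now apply Hs. }
  assert (Hy0 : y A <> 0).
  { intros E. apply locally_singleton in Hroots. rewrite Hx0, E in Hroots.
    exact (origin_not_root A Hroots). }
  destruct (Rtotal_order (y A) 0) as [Hneg|[Hzero|Hpos]]; [|contradiction|].
  - apply transversality_upper with (y := fun a => - y a); [|exact Dx| |exact Hx0|fold A; lra].
    + assert (Hneg' : locally A (fun a => y a < 0)).
      { apply locally_lt_of_continuity; [now apply continuity_pt_of_ex_derive|lra]. }
      eapply filter_imp; [|exact (filter_and _ _ Hroots Hneg')]. intros a [Hroot Hya].
      apply DeltaQ_conj_eq_0; [apply Rlt_not_eq; lra|exact Hroot].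
    + exact (ex_derive_opp y A Dy).
  - now apply transversality_upper with (y := y).
Qed.

Lemma stable_iff (a : R) :
  (forall s : C, DeltaQ q1 q2 a b c s = 0 -> Re s < 0) <-> a_star b c q1 q2 < a.
Proof.
  split.
  - intros Hstable. destruct (Rlt_le_dec (a_star b c q1 q2) a) as [|Hle]; [assumption|exfalso].
    destruct (Rle_lt_or_eq_dec _ _ Hle) as [Hlt|Heq].
    + destruct (right_root_of_lt_a_star a Hlt) as [x [y [Hx [_ Hroot]]]].
      specialize (Hstable _ Hroot). simpl in Hstable. lra.
    + destruct (proj2 (imaginary_roots_iff a) Heq) as [w [_ [Hroot _]]].
      specialize (Hstable _ Hroot). simpl in Hstable. lra.
  - intros Ha [x y] Hroot. simpl. destruct (Rlt_or_le x 0) as [|Hx]; [assumption|].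
    destruct (closed_right_root_le a x y Hx Hroot). lra.
Qed.

Lemma unstable_iff (a : R) :
  (exists s : C, 0 < Re s /\ DeltaQ q1 q2 a b c s = 0 /\ DeltaQ q1 q2 a b c (Cconj s) = 0)
  <-> a < a_star b c q1 q2.
Proof.
  split.
  - intros [[x y] [Hx [Hroot _]]].
    exact (proj2 (closed_right_root_le a x y (Rlt_le _ _ Hx) Hroot) Hx).
  - intros Ha. destruct (right_root_of_lt_a_star a Ha) as [x [y [Hx [Hy Hroot]]]].
    exists (x, y). repeat split; [exact Hx|exact Hroot|]. unfold Cconj. simpl.
    destruct (Rle_lt_or_eq_dec _ _ Hy) as [Hy'|<-].
    + apply DeltaQ_conj_eq_0; [lra|exact Hroot].
    + now rewrite Ropp_0.
Qed.

End Positive_c.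

End Exponents.

Theorem proposition1 (q1 q2 : R) (Hq1 : 0 < q1) (Hq12 : q1 < q2) (Hq2 : q2 < 1) :
  (* 1 *)
  (forall a b c : R, c < 0 ->
     exists x : R, 0 < x /\ DeltaQ q1 q2 a b c (RtoC x) = RtoC 0) /\
  (* 2 *)
  (forall a b c : R, DeltaQ q1 q2 a b c (RtoC 0) = RtoC 0 <-> c = 0) /\
  (* 3 *)
  (forall b c : R, 0 < c ->
     (* (a) *)
     (forall a : R, 0 <= a -> 0 <= b ->
        forall s : C, DeltaQ q1 q2 a b c s = RtoC 0 -> Re s < 0) /\
     (* (b) *)
     (forall a : R,
        (exists w : R, 0 < w /\ DeltaQ q1 q2 a b c (0, w) = RtoC 0
                             /\ DeltaQ q1 q2 a b c (0, - w) = RtoC 0)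
        <-> a = a_star b c q1 q2) /\
     (* (c) *)
     (forall s : R -> C,
        (exists eps : R, 0 < eps /\
           forall a : R, Rabs (a - a_star b c q1 q2) < eps ->
             DeltaQ q1 q2 a b c (s a) = RtoC 0) ->
        ex_derive (fun a => Re (s a)) (a_star b c q1 q2) ->
        ex_derive (fun a => Im (s a)) (a_star b c q1 q2) ->
        Re (s (a_star b c q1 q2)) = 0 ->
        Derive (fun a => Re (s a)) (a_star b c q1 q2) < 0) /\
     (* (d) *)
     (forall a : R,
        (forall s : C, DeltaQ q1 q2 a b c s = RtoC 0 -> Re s < 0)
        <-> a_star b c q1 q2 < a) /\
     (* (e) *)
     (forall a : R,
        (exists s : C, 0 < Re s /\ DeltaQ q1 q2 a b c s = RtoC 0
                               /\ DeltaQ q1 q2 a b c (Cconj s) = RtoC 0)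
        <-> a < a_star b c q1 q2)).
Proof.
  split; [|split].
  - intros a b c Hc. destruct (DeltaR_root_of_c_neg q1 q2 Hq1 Hq12 Hq2 a b c Hc) as [x [Hx Hroot]].
    exists x. split; [exact Hx|]. change (RtoC x) with (x, 0).
    rewrite DeltaQ_pos_real, Hroot by exact Hx. reflexivity.
  - intros a b c. rewrite DeltaQ_0. split; [intros E; now injection E|intros ->; reflexivity].
  - intros b c Hc. repeat split.
    + now apply roots_left_of_nonneg_coeffs.
    + now apply imaginary_roots_iff.
    + now apply imaginary_roots_iff.
    + now apply transversality.
    + now apply stable_iff.
    + now apply stable_iff.
    + now apply unstable_iff.
    + now apply unstable_iff.
Qed.
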